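(* Let $H$ be an $r$-cross-free hypergraph on $V=[n]$, and let $\emptyset$ be the hypergraph on $V$ with no hyperedges. Then $$|H\setminus \mathrm{cl}_r(\emptyset)|\le|\mathrm{cl}_r(H)\setminus\mathrm{cl}_r(\emptyset)|\le 2\,|H\setminus\mathrm{cl}_r(\emptyset)|.$$
   Context: Hypergraphs on $V$ are identified with their hyperedge sets; set differences and cardinalities are of hyperedge sets. $\mathcal K_r(n)$ is the class of hypergraphs $\mathcal E$ on $V$ satisfying: (R0) every $X\subseteq V$ with $|X|\le r$ is in $\mathcal E$; (R1) $A\in\mathcal E\Rightarrow V\setminus A\in\mathcal E$; (R2) $A,B\in\mathcal E$ and $|A\cap B|\ge r\Rightarrow A\cup B\in\mathcal E$. $\mathcal K^0_r(n)$ is the class satisfying (R0) and (R1) only. $\mathrm{cl}_r(H)$ (resp. $\mathrm{cl}^0_r(H)$) is the intersection of all hypergraphs in $\mathcal K_r(n)$ (resp. $\mathcal K^0_r(n)$) containing $H$. $A,B\subseteq V$ are $r$-orthogonal if $\mathrm{cl}_r(\{A,B\})=\mathrm{cl}^0_r(\{A,B\})$. $H$ is $r$-cross-free if every pair of its hyperedges is $r$-orthogonal. *)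

From mathcomp Require Import all_boot.
Set Implicit Arguments. Unset Strict Implicit. Unset Printing Implicit Defensive.

(* Ground set V = [n] is represented by 'I_n; a hypergraph on V is identified
   with its set of hyperedges, i.e. an element of {set {set 'I_n}}. *)
Notation hypergraph n := {set {set 'I_n}}.

Definition R0 (n r : nat) (E : hypergraph n) : bool :=
  [forall X : {set 'I_n}, (#|X| <= r) ==> (X \in E)].

Definition R1 (n : nat) (E : hypergraph n) : bool :=
  [forall A in E, ~: A \in E].

Definition R2 (n r : nat) (E : hypergraph n) : bool :=
  [forall A in E, forall B in E, (r <= #|A :&: B|) ==> (A :|: B \in E)].

Definition inK (n r : nat) (E : hypergraph n) : bool := [&& R0 r E, R1 E & R2 r E].
Definition inK0 (n r : nat) (E : hypergraph n) : bool := R0 r E && R1 E.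

Definition cl (n r : nat) (H : hypergraph n) : hypergraph n :=
  \bigcap_(E : hypergraph n | inK r E && (H \subset E)) E.

Definition cl0 (n r : nat) (H : hypergraph n) : hypergraph n :=
  \bigcap_(E : hypergraph n | inK0 r E && (H \subset E)) E.

Definition orthogonal (n r : nat) (A B : {set 'I_n}) : bool :=
  cl r [set A; B] == cl0 r [set A; B].

Definition cross_free (n r : nat) (H : hypergraph n) : bool :=
  [forall A in H, forall B in H, orthogonal r A B].

(* cl_r(H) is contained in H ∪ {~X | X ∈ H} ∪ cl_r(∅), because this
   hypergraph belongs to K_r(n): (R0) and (R1) are clear, and for (R2) two of
   its hyperedges not both in cl_r(∅) lie in cl_r({X, Y}) for some X, Y ∈ H.
   By cross-freeness cl_r({X, Y}) = cl^0_r({X, Y}), which contains only X, Y,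
   their complements and sets of size or co-size at most r, all of which lie
   in the hypergraph.  As cl_r(∅) is closed under complement, what remains of
   cl_r(H) outside cl_r(∅) consists of the sets of H ∖ cl_r(∅) and their
   complements. *)

From mathcomp Require Import all_boot.
Set Implicit Arguments. Unset Strict Implicit. Unset Printing Implicit Defensive.

Section ComplementClosure.
Variable T : finType.
Implicit Types (K C : {set {set T}}) (X : {set T}).

Definition symC K : {set {set T}} := K :|: [set ~: X | X in K].

Lemma symCE K X : (X \in symC K) = (X \in K) || (~: X \in K).
Proof. by rewrite inE (can_imset_pre _ setCK) inE. Qed.

Lemma symC_setC K X : (~: X \in symC K) = (X \in symC K).
Proof. by rewrite !symCE setCK orbC. Qed.

Lemma card_symC K : #|symC K| <= 2 * #|K|.
Proof.
rewrite mul2n -addnn -{2}(card_imset K (@setC_inj T)).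
exact: leq_card_setU.
Qed.

Lemma symCD K C :
  (forall X, (~: X \in C) = (X \in C)) -> symC K :\: C = symC (K :\: C).
Proof.
move=> CC; apply/setP => X; rewrite in_setD !symCE !in_setD CC.
by rewrite andb_orr.
Qed.

Lemma symCU_setC K C X :
  (forall X, (~: X \in C) = (X \in C)) ->
  (~: X \in symC K :|: C) = (X \in symC K :|: C).
Proof. by move=> CC; rewrite in_setU [X \in _]in_setU symC_setC CC. Qed.

End ComplementClosure.

Section Closure.
Variables n r : nat.
Implicit Types (E H : {set {set 'I_n}}) (A B X Y : {set 'I_n}).

Lemma R0P E : reflect (forall X, #|X| <= r -> X \in E) (R0 r E).
Proof. by apply: (iffP forallP) => h X; apply/implyP/h. Qed.

Lemma R1P E : reflect (forall A, A \in E -> ~: A \in E) (R1 E).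
Proof. by apply: (iffP forallP) => h A; apply/implyP/h. Qed.

Lemma R2P E :
  reflect (forall A B, A \in E -> B \in E -> r <= #|A :&: B| -> A :|: B \in E)
          (R2 r E).
Proof.
apply: (iffP forallP) => [h A B EA EB | h A].
  by move/implyP/(_ EA)/forall_inP/(_ B EB)/implyP: (h A).
by apply/implyP => EA; apply/forall_inP => B EB; apply/implyP/h.
Qed.

Lemma R1_setC E A : R1 E -> (~: A \in E) = (A \in E).
Proof. by move/R1P=> EC; apply/idP/idP => [/EC | /EC //]; rewrite setCK. Qed.

Lemma sub_cl H : H \subset cl r H.
Proof. by apply/bigcapsP => E /andP[]. Qed.

Lemma cl_min H E : inK r E -> H \subset E -> cl r H \subset E.
Proof. by move=> KE HE; apply: bigcap_inf; rewrite KE HE. Qed.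

Lemma cl0_min H E : inK0 r E -> H \subset E -> cl0 r H \subset E.
Proof. by move=> KE HE; apply: bigcap_inf; rewrite KE HE. Qed.

Lemma cl_inK H : inK r (cl r H).
Proof.
apply/and3P; split.
- apply/R0P => X hX; apply/bigcapP => E /andP[/and3P[/R0P E0 _ _] _].
  exact: E0.
- apply/R1P => A /bigcapP clA; apply/bigcapP => E KE.
  by case/andP: (KE) => /and3P[_ /R1P E1 _] _; apply/E1/clA.
- apply/R2P => A B /bigcapP clA /bigcapP clB rAB; apply/bigcapP => E KE.
  by case/andP: (KE) => /and3P[_ _ /R2P E2] _; apply: E2 (clA _ _) (clB _ _) _.
Qed.

Lemma clS H1 H2 : H1 \subset H2 -> cl r H1 \subset cl r H2.
Proof. by move=> sH12; apply: cl_min (cl_inK _) (subset_trans sH12 (sub_cl _)). Qed.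

Lemma cl_setC H A : (~: A \in cl r H) = (A \in cl r H).
Proof. by case/and3P: (cl_inK H) => _ /R1_setC. Qed.

Definition small_or_cosmall : {set {set 'I_n}} :=
  [set X : {set 'I_n} | (#|X| <= r) || (#|~: X| <= r)].

Lemma small_or_cosmall_sub E : inK0 r E -> small_or_cosmall \subset E.
Proof.
case/andP=> /R0P E0 E1; apply/subsetP => X; rewrite inE.
by case/orP=> /E0 //; rewrite R1_setC.
Qed.

Lemma small_or_cosmall_sub_cl H : small_or_cosmall \subset cl r H.
Proof.
by case/and3P: (cl_inK H) => E0 E1 _; apply: small_or_cosmall_sub; apply/andP.
Qed.

Lemma cl0_pair_sub X Y :
  cl0 r [set X; Y] \subset symC [set X; Y] :|: small_or_cosmall.
Proof.
apply: cl0_min; last first.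
  by apply/subsetP => Z XYZ; rewrite inE symCE XYZ.
apply/andP; split.
  by apply/R0P => Z Zr; rewrite !inE Zr orbT.
apply/R1P => Z; rewrite symCU_setC // => {}Z.
by rewrite !inE setCK orbC.
Qed.

Lemma symC_pair_sub_cl X Y : symC [set X; Y] \subset cl r [set X; Y].
Proof.
apply/subsetP => Z; rewrite symCE => /orP[] XYZ; last rewrite -cl_setC;
  exact: (subsetP (sub_cl _)).
Qed.

Section CrossFree.
Variable H : {set {set 'I_n}}.
Hypothesis crossH : cross_free r H.

Let hull := symC H :|: cl r set0.

Lemma cl_orthogonal_pair_sub X Y :
  X \in H -> Y \in H -> cl r [set X; Y] \subset hull.
Proof.
move=> HX HY; have /eqP-> : orthogonal r X Y.
  by move/forall_inP/(_ X HX)/forall_inP/(_ Y HY): crossH.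
apply: subset_trans (cl0_pair_sub X Y) _; apply: setUSS.
  by apply/subsetP => Z; rewrite !symCE !inE => /orP[]/orP[]/eqP->;
     rewrite ?setCK ?HX ?HY ?orbT.
exact: small_or_cosmall_sub_cl.
Qed.

Lemma symC_cl_pair A :
  A \in symC H -> exists2 X, X \in H & forall Y, A \in cl r [set X; Y].
Proof.
rewrite symCE => /orP[HA | HCA].
  by exists A => // Y; apply: (subsetP (symC_pair_sub_cl _ _)); rewrite symCE !inE eqxx.
by exists (~: A) => // Y; rewrite -cl_setC; apply: (subsetP (sub_cl _)); rewrite !inE eqxx.
Qed.

Lemma hull_cl_pair A B :
  B \in hull -> A \in symC H ->
  exists X Y, [/\ X \in H, Y \in H, A \in cl r [set X; Y] & B \in cl r [set X; Y]].
Proof.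
move=> hB /symC_cl_pair[X HX clA].
have cl0S Y : cl r set0 \subset cl r [set X; Y] by apply/clS/sub0set.
case/setUP: hB => [/symC_cl_pair[Y HY clB] | C0B].
  by exists X, Y; split; rewrite // setUC; apply: clB.
by exists X, X; split; rewrite // (subsetP (cl0S X)).
Qed.

Lemma hull_inK : inK r hull.
Proof.
case/and3P: (cl_inK set0) => /R0P C0 _ /R2P C2.
apply/and3P; split.
- by apply/R0P => X Xr; rewrite inE C0 ?orbT.
- by apply/R1P => A; rewrite symCU_setC // => {}A; apply: cl_setC.
- apply/R2P => A B hA hB rAB.
  wlog SA : A B hA hB rAB / A \in symC H.
    move=> gen; have [|nSA] := boolP (A \in symC H); first exact: gen.
    have [SB|nSB] := boolP (B \in symC H); first by rewrite setUC gen // setIC.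
    move: hA hB; rewrite in_setU (negbTE nSA) => C0A.
    by rewrite in_setU (negbTE nSB) => C0B; rewrite in_setU C2 ?orbT.
  have [X [Y [HX HY clA clB]]] := hull_cl_pair hB SA.
  apply: (subsetP (cl_orthogonal_pair_sub HX HY)).
  by case/and3P: (cl_inK [set X; Y]) => _ _ /R2P; apply.
Qed.

Lemma cl_cross_free_sub : cl r H \subset symC H :|: cl r set0.
Proof. by apply: cl_min hull_inK _; apply/subsetP => X HX; rewrite !inE HX. Qed.

End CrossFree.
End Closure.

Theorem mainTheorem17 (n r : nat) (H : {set {set 'I_n}}) :
  cross_free r H ->
  #|H :\: cl r set0| <= #|cl r H :\: cl r set0| /\
  #|cl r H :\: cl r set0| <= 2 * #|H :\: cl r set0|.
Proof.
move=> crossH; split; first by apply/subset_leq_card/setSD/sub_cl.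
set C0 := cl r set0.
have clHD : cl r H :\: C0 \subset symC (H :\: C0).
  rewrite -symCD; last exact: cl_setC.
  apply/subsetP => A /setDP[/(subsetP (cl_cross_free_sub crossH)) hullA C0A].
  by rewrite inE C0A; case/setUP: hullA C0A => // ->.
exact: leq_trans (subset_leq_card clHD) (card_symC _).
Qed.
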